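(* Let $\Omega$ be a metrizable separable space and $c$ a capacity on $\mathcal{L}$, extended to all real functions on $\Omega$. (i) For every open $V\subset\Omega$ there is an increasing sequence of non-negative continuous functions $h_n$ with $1_V=\lim_n h_n$ and $c(1_V)=\lim_n c(h_n)$. (ii) For every closed $F\subset\Omega$ there is a decreasing sequence of continuous functions $g_n\le1$ with $1_F=\lim_n g_n$ and $c(1_F)=\lim_n c(g_n)$.
   Context: $\mathcal{L}\subset\mathcal{C}_b(\Omega)$ is a linear subspace which is a vector lattice, contains the constants and generates the topology of $\Omega$. A capacity on $\mathcal{L}$ is a seminorm $c$ with $c(f)\le c(g)$ whenever $|f|\le|g|$, and $\inf_n c(f_n)=0$ for every sequence $f_n\in\mathcal{L}$ decreasing pointwise to $0$. It is extended to all real functions by $c(f)=\sup\{c(\varphi):\varphi\in\mathcal{L},0\le\varphi\le f\}$ for $f\ge0$ lower semicontinuous and $c(g)=\inf\{c(f):f\text{ l.s.c.},f\ge|g|\}$ for arbitrary $g$. *)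

From HB Require Import structures.
From mathcomp Require Import all_boot all_order all_algebra.
From mathcomp Require Import all_classical all_reals all_analysis.
Set Implicit Arguments. Unset Strict Implicit. Unset Printing Implicit Defensive.
Import Order.TTheory GRing.Theory Num.Theory numFieldTopology.Exports numFieldNormedType.Exports.
Local Open Scope classical_set_scope.
Local Open Scope ring_scope.

Section defs.
Context {R : realType} {T : topologicalType}.

Definition metrizable_space : Prop :=
  exists d : T -> T -> R,
    [/\ (forall x y, 0 <= d x y), (forall x y, d x y = 0 <-> x = y),
        (forall x y, d x y = d y x),
        (forall x y z, d x z <= d x y + d y z) &
        (forall A : set T, open A <->
           (forall x, A x -> exists2 e : R, 0 < e & [set y | d x y < e] `<=` A))].

Definition separable_space : Prop :=
  exists D : set T, countable D /\ closure D = setT.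

Definition Cb_lattice (L : set (T -> R)) : Prop :=
  [/\ (forall f, L f -> continuous f /\ exists M : R, forall x, `|f x| <= M),
      (forall f g, L f -> L g -> L (f \+ g)),
      (forall (a : R) f, L f -> L (fun x => a * f x)),
      (forall f g, L f -> L g -> L (fun x => Num.max (f x) (g x))) &
      (forall a : R, L (fun _ => a))].

Definition generates_topology (L : set (T -> R)) : Prop :=
  forall U : set T, open U -> forall x, U x ->
    exists s : seq (T -> R), (forall f, f \in s -> L f) /\
      exists2 e : R, 0 < e &
        [set y | forall f, f \in s -> `|f y - f x| < e] `<=` U.

Definition capacity (L : set (T -> R)) (c : (T -> R) -> R) : Prop :=
  [/\ (forall f g, L f -> L g -> c (f \+ g) <= c f + c g),
      (forall (a : R) f, L f -> c (fun x => a * f x) = `|a| * c f),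
      (forall f g, L f -> L g -> (forall x, `|f x| <= `|g x|) -> c f <= c g) &
      (forall fn : nat -> T -> R, (forall n, L (fn n)) ->
         (forall n x, fn n.+1 x <= fn n x) ->
         (forall x, fn n x @[n --> \oo] --> 0) ->
         inf (range (fun n => c (fn n))) = 0)].

Local Open Scope ereal_scope.

(* c(f) for f >= 0 lower semicontinuous *)
Definition cap_lsc (L : set (T -> R)) (c : (T -> R) -> R) (f : T -> R) : \bar R :=
  ereal_sup [set (c phi)%:E | phi in
               [set phi | L phi /\ forall x, (0 <= phi x <= f x)%R]].

Definition cap_ext (L : set (T -> R)) (c : (T -> R) -> R) (g : T -> R) : \bar R :=
  ereal_inf [set cap_lsc L c f | f in
               [set f | lower_semicontinuous (fun x => (f x)%:E) /\
                        forall x, (`|g x| <= f x)%R]].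
End defs.

(* For an open V, c(1_V) is approached from below by functions phi_n of L with
   0 <= phi_n <= 1_V; taking running maxima of the phi_n together with Urysohn
   functions that equal 1 on an exhausting sequence of closed subsets of V gives
   continuous h_n increasing to 1_V with c(phi_n) <= c(h_n) <= c(1_V).
   For a closed F = \bigcap_n U_n, pick lower semicontinuous f_n >= 1_F with
   c(f_n) <= c(1_F) + 1/(n+1).  The open set W_n = {f_n > 1/(1 + 1/(n+1))}
   contains F and satisfies 1_(W_n) <= (1 + 1/(n+1)) f_n, so running minima of
   Urysohn functions between F and W_n /\ U_n decrease to 1_F with capacities
   squeezed between c(1_F) and (1 + 1/(n+1)) (c(1_F) + 1/(n+1)).
   Metrizability is used only to get Urysohn functions and closed G_delta sets. *)

From HB Require Import structures.
From mathcomp Require Import all_boot all_order all_algebra.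
From mathcomp Require Import all_classical all_reals all_analysis.
From mathcomp Require Import lra.

Set Implicit Arguments.
Unset Strict Implicit.
Unset Printing Implicit Defensive.
Import Order.TTheory GRing.Theory Num.Theory numFieldTopology.Exports numFieldNormedType.Exports.
Local Open Scope classical_set_scope.
Local Open Scope ring_scope.

Section indicator.
Context {R : realType} {T : topologicalType}.
Implicit Types A V : set T.

Lemma indic_ge0 A x : 0 <= \1_A x :> R.
Proof. by rewrite indicE ler0n. Qed.

Lemma indic_le1 A x : \1_A x <= 1 :> R.
Proof. by rewrite indicE; case: (x \in A). Qed.

Lemma le_indic A (k : T -> R) x : k x <= 1 -> (~ A x -> k x = 0) -> k x <= \1_A x.
Proof.
move=> k1 kA; have [Ax|Ax] := pselect (A x); first by rewrite indicE mem_set.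
by rewrite kA // indicE memNset.
Qed.

Lemma indic_le A (k : T -> R) x : 0 <= k x -> (A x -> k x = 1) -> \1_A x <= k x.
Proof.
move=> k0 kA; have [Ax|Ax] := pselect (A x); first by rewrite kA // indicE mem_set.
by rewrite indicE memNset.
Qed.

Lemma lower_semicontinuous_indic V :
  open V -> lower_semicontinuous (fun x => (\1_V x : R)%:E).
Proof.
move=> oV x a; rewrite lte_fin => ax; have [Vx|Vx] := pselect (V x).
  exists V; first exact: open_nbhs_nbhs.
  by move=> y Vy; rewrite lte_fin indicE mem_set //; rewrite indicE mem_set in ax.
exists setT; first exact: filterT.
by move=> y _; rewrite lte_fin; rewrite indicE memNset // in ax; apply: lt_le_trans ax _.
Qed.

Lemma continuous_lower_semicontinuous (h : T -> R) :
  continuous h -> lower_semicontinuous (fun x => (h x)%:E).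
Proof.
move=> ch x a; rewrite lte_fin => ax.
by exists [set y | a < h y]; [exact: (cvgr_gt _ (ch x)) | move=> y; rewrite lte_fin].
Qed.

End indicator.

Fixpoint running_max {R : realType} {T : Type} (a : nat -> T -> R) (n : nat) : T -> R :=
  if n is m.+1 then fun x => Num.max (running_max a m x) (a m.+1 x) else a 0%N.

Fixpoint running_min {R : realType} {T : Type} (a : nat -> T -> R) (n : nat) : T -> R :=
  if n is m.+1 then fun x => Num.min (running_min a m x) (a m.+1 x) else a 0%N.

Section running_extrema.
Context {R : realType} {T : topologicalType}.
Implicit Types (a : nat -> T -> R) (A : set T).

Lemma running_max_nondecreasing a n x : running_max a n x <= running_max a n.+1 x.
Proof. by rewrite /= le_max lexx. Qed.

Lemma running_min_nonincreasing a n x : running_min a n.+1 x <= running_min a n x.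
Proof. by rewrite /= ge_min lexx. Qed.

Lemma le_running_max a m n x : (m <= n)%N -> a m x <= running_max a n x.
Proof.
elim: n => [|n IH]; first by rewrite leqn0 => /eqP ->.
rewrite leq_eqVlt ltnS => /orP[/eqP ->|/IH amx]; first by rewrite /= le_max lexx orbT.
exact: le_trans amx (running_max_nondecreasing _ _ _).
Qed.

Lemma ge_running_min a m n x : (m <= n)%N -> running_min a n x <= a m x.
Proof.
elim: n => [|n IH]; first by rewrite leqn0 => /eqP ->.
rewrite leq_eqVlt ltnS => /orP[/eqP ->|/IH amx]; first by rewrite /= ge_min lexx orbT.
exact: le_trans (running_min_nonincreasing _ _ _) amx.
Qed.

Lemma running_max_le a n x b : (forall m, a m x <= b) -> running_max a n x <= b.
Proof. by move=> ab; elim: n => [|n IH] //=; rewrite ge_max IH ab. Qed.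

Lemma running_min_ge a n x b : (forall m, b <= a m x) -> b <= running_min a n x.
Proof. by move=> ba; elim: n => [|n IH] //=; rewrite le_min IH ba. Qed.

Lemma running_max_continuous a n :
  (forall m, continuous (a m)) -> continuous (running_max a n).
Proof. by move=> ca; elim: n => [|n IH] //=; exact: max_fun_continuous. Qed.

Lemma running_min_continuous a n :
  (forall m, continuous (a m)) -> continuous (running_min a n).
Proof. by move=> ca; elim: n => [|n IH] //=; exact: min_fun_continuous. Qed.

Lemma running_max_cvg_indic A a :
  (forall n x, 0 <= a n x <= \1_A x) -> (forall x, A x -> exists m, a m x = 1) ->
  forall x, running_max a n x @[n --> \oo] --> (\1_A x : R).
Proof.
move=> a01 a1 x; have [m am] : exists m, \1_A x <= a m x.
  have [Ax|Ax] := pselect (A x); last first.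
    by exists 0%N; rewrite indicE memNset //; case/andP: (a01 0%N x).
  by have [m am1] := a1 x Ax; exists m; rewrite am1 indicE mem_set.
apply: cvg_near_cst; near=> n; apply/le_anti/andP; split.
  by apply: running_max_le => k; case/andP: (a01 k x).
apply: le_trans am _; apply: le_running_max; near: n; exact: nbhs_infty_ge.
Unshelve. all: end_near.
Qed.

Lemma running_min_cvg_indic A a :
  (forall n x, \1_A x <= a n x <= 1) -> (forall x, ~ A x -> exists m, a m x = 0) ->
  forall x, running_min a n x @[n --> \oo] --> (\1_A x : R).
Proof.
move=> a01 a0 x; have [m am] : exists m, a m x <= \1_A x.
  have [Ax|Ax] := pselect (A x).
    by exists 0%N; rewrite indicE mem_set //; case/andP: (a01 0%N x).
  by have [m am0] := a0 x Ax; exists m; rewrite am0 indicE memNset.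
apply: cvg_near_cst; near=> n; apply/le_anti/andP; split; last first.
  by apply: running_min_ge => k; case/andP: (a01 k x).
apply: le_trans _ am; apply: ge_running_min; near: n; exact: nbhs_infty_ge.
Unshelve. all: end_near.
Qed.

End running_extrema.

Definition urysohn_space (R : realType) (T : topologicalType) : Prop :=
  forall F W : set T, closed F -> open W -> F `<=` W ->
  exists k : T -> R, [/\ continuous k, (forall x, 0 <= k x <= 1),
     (forall x, F x -> k x = 1) & (forall x, ~ W x -> k x = 0)].

Definition closed_Gdelta (T : topologicalType) : Prop :=
  forall F : set T, closed F ->
  exists2 U : nat -> set T, (forall n, open (U n)) & F = \bigcap_n U n.

Section metric.
Context {R : realType} {T : topologicalType} (d : T -> T -> R).
Hypothesis d_ge0 : forall x y, 0 <= d x y.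
Hypothesis dxx : forall x, d x x = 0.
Hypothesis dC : forall x y, d x y = d y x.
Hypothesis d_triangle : forall x y z, d x z <= d x y + d y z.
Hypothesis d_open : forall A : set T, open A <->
  (forall x, A x -> exists2 e : R, 0 < e & [set y | d x y < e] `<=` A).

Lemma nbhs_dball x e : 0 < e -> nbhs x [set y | d x y < e].
Proof.
move=> e0; apply: open_nbhs_nbhs; split; last by rewrite /= dxx.
apply/d_open => y /= yx; exists (e - d x y); first by rewrite subr_gt0.
by move=> z /= zy; have := d_triangle x y z; lra.
Qed.

Lemma lipschitz_continuous (g : T -> R) K : 0 < K ->
  (forall x y, `|g x - g y| <= K * d x y) -> continuous g.
Proof.
move=> K0 gK x; apply/cvgrPdist_lt => e e0.
near=> y; apply: le_lt_trans (gK x y) _; rewrite mulrC -ltr_pdivlMr //.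
by near: y; exact: nbhs_dball (divr_gt0 e0 K0).
Unshelve. all: end_near.
Qed.

(* Since [inf set0 = 0], [setdist set0] vanishes identically. *)
Definition setdist (A : set T) x := inf [set d x y | y in A].

Lemma setdist_ge0 A x : 0 <= setdist A x.
Proof.
have [[y Ay]|A0] := pselect (A !=set0).
  by apply: lb_le_inf; [exists (d x y), y | move=> _ [z _ <-]].
by rewrite (_ : A = set0) ?/setdist ?image_set0 ?inf0 // -subset0 => z Az; apply: A0; exists z.
Qed.

Lemma setdist_le A x y : A y -> setdist A x <= d x y.
Proof.
move=> Ay; apply: (ge_inf (E := [set d x y | y in A])); last by exists y.
by exists 0 => _ [z _ <-].
Qed.

Lemma setdist_glb A x r : A !=set0 -> (forall y, A y -> r <= d x y) -> r <= setdist A x.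
Proof.
by move=> [y Ay] rA; apply: lb_le_inf; [exists (d x y), y | move=> _ [z /rA ? <-]].
Qed.

Lemma setdist0 A x : A x -> setdist A x = 0.
Proof. by move=> Ax; apply/le_anti; rewrite setdist_ge0 andbT -(dxx x) setdist_le. Qed.

Lemma setdist_triangle A x y : A !=set0 -> setdist A x <= d x y + setdist A y.
Proof.
move=> A0; rewrite -lerBlDl; apply: setdist_glb => // z Az.
by rewrite lerBlDl; apply: le_trans (setdist_le x Az) _.
Qed.

Lemma setdist_continuous A : A !=set0 -> continuous (setdist A).
Proof.
move=> A0; apply: (@lipschitz_continuous _ 1) => // x y; rewrite mul1r ler_norml.
by have := setdist_triangle x y A0; have := setdist_triangle y x A0; rewrite (dC y x); lra.
Qed.

Lemma setdist_gt0 A x : A !=set0 -> closed A -> ~ A x -> 0 < setdist A x.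
Proof.
move=> A0 /closed_openC/d_open oA Ax; have [e e0 eA] := oA x Ax.
apply: lt_le_trans e0 _; apply: setdist_glb => // y Ay.
by rewrite leNgt; apply/negP => /eA.
Qed.

Lemma open_setdist_lt A e : A !=set0 -> open [set x | setdist A x < e].
Proof.
move=> A0; apply/d_open => y /= ye; exists (e - setdist A y); first by rewrite subr_gt0.
by move=> z /= zy; have := setdist_triangle z y A0; rewrite dC; lra.
Qed.

Lemma metric_urysohn : urysohn_space R T.
Proof.
move=> F W cF oW FW.
have [F0|F0] := pselect (F !=set0); last first.
  exists (fun=> 0); split=> [|x|x Fx|//]; first exact: cst_continuous.
    by rewrite lexx ler01.
  by exfalso; apply: F0; exists x.
have [W0|W0] := pselect ((~` W) !=set0); last first.
  exists (fun=> 1); split=> [|x|//|x Wx]; first exact: cst_continuous.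
    by rewrite lexx ler01.
  by exfalso; apply: W0; exists x.
pose a := setdist (~` W); pose b := setdist F.
have ab_gt0 x : 0 < a x + b x.
  have [Wx|Wx] := pselect (W x).
    by apply: ltr_wpDr; [exact: setdist_ge0 | exact: setdist_gt0 W0 (open_closedC oW) _].
  apply: ltr_wpDl; first exact: setdist_ge0.
  by apply: (setdist_gt0 F0 cF) => /FW.
exists (fun x => a x / (a x + b x)); split.
- move=> x; apply: cvgM; first exact: setdist_continuous.
  by apply: cvgV; [rewrite gt_eqF | apply: cvgD; exact: setdist_continuous].
- move=> x; rewrite divr_ge0 ?setdist_ge0 ?(ltW (ab_gt0 x)) //=.
  by rewrite ler_pdivrMr // mul1r lerDl setdist_ge0.
- move=> x Fx; have := ab_gt0 x; rewrite /b setdist0 // addr0 => ax.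
  by rewrite divff // gt_eqF.
- by move=> x Wx; rewrite /a setdist0 // mul0r.
Qed.

Lemma metric_closed_Gdelta : closed_Gdelta T.
Proof.
move=> F cF; have [F0|F0] := pselect (F !=set0); last first.
  exists (fun=> set0) => [n|]; first exact: open0.
  apply/seteqP; split=> [x Fx|x /(_ 0%N I) //].
  by exfalso; apply: F0; exists x.
exists (fun n => [set x | setdist F x < harmonic n]) => [n|].
  exact: open_setdist_lt.
apply/seteqP; split=> [x Fx n _|x Ox]; first by rewrite /= setdist0 ?harmonic_gt0.
apply: contrapT => Fx; have dx := setdist_gt0 F0 cF Fx.
have [n hn] := filter_ex (cvgr_lt _ (@cvg_harmonic R) _ dx).
by have := Ox n I; rewrite /= ltNge (ltW hn).
Qed.

End metric.

Section perfectly_normal.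
Context {R : realType} {T : topologicalType}.
Hypothesis urysohnT : urysohn_space R T.
Hypothesis GdeltaT : closed_Gdelta T.

Lemma urysohn_seq_open (V : set T) : open V ->
  exists k : nat -> T -> R, [/\ (forall n, continuous (k n)),
    (forall n x, 0 <= k n x <= \1_V x) & (forall x, V x -> exists m, k m x = 1)].
Proof.
move=> oV; have [U oU VE] := GdeltaT (open_closedC oV).
have UV n : ~` U n `<=` V.
  move=> x Ux; apply: contrapT => Vx; apply: Ux; suff : (~` V) x by rewrite VE => /(_ n I).
  exact: Vx.
have /choice [k kP] n := urysohnT (open_closedC (oU n)) oV (UV n).
exists k; split=> [n|n x|x Vx]; first by case: (kP n).
  by have [_ /(_ x) /andP[-> k1] _ kV] := kP n; exact: le_indic k1 (kV x).
have [m Um] : exists m, ~ U m x.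
  apply: contrapT => /forallNP Ux; suff : (~` V) x by [].
  by rewrite VE => n _; exact: contrapT (Ux n).
by exists m; have [_ _ km1 _] := kP m; exact: km1.
Qed.

Lemma urysohn_seq_closed (F : set T) (W : nat -> set T) : closed F ->
  (forall n, open (W n)) -> (forall n, F `<=` W n) ->
  exists k : nat -> T -> R, [/\ (forall n, continuous (k n)),
    (forall n x, \1_F x <= k n x <= \1_(W n) x) & (forall x, ~ F x -> exists m, k m x = 0)].
Proof.
move=> cF oW FW; have [U oU FE] := GdeltaT cF.
have FWU n : F `<=` W n `&` U n.
  by move=> x Fx; split; [exact: FW | move: Fx; rewrite FE => /(_ n I)].
have /choice [k kP] n := urysohnT cF (openI (oW n) (oU n)) (FWU n).
exists k; split=> [n|n x|x Fx]; first by case: (kP n).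
  have [_ /(_ x) /andP[k0 k1] kF kWU] := kP n.
  rewrite (indic_le k0 (kF x)) /=; apply: le_indic k1 _ => Wx.
  by apply: kWU => -[/Wx].
have [m Um] : exists m, ~ U m x.
  by apply: contrapT => /forallNP Ux; apply: Fx; rewrite FE => n _; exact: contrapT (Ux n).
by exists m; have [_ _ _ km0] := kP m; apply: km0 => -[].
Qed.

End perfectly_normal.

Lemma squeeze_fin_cvge {R : realType} (u : nat -> \bar R) (lo hi : nat -> R) (r : R) :
  (forall n, ((lo n)%:E <= u n <= (hi n)%:E)%E) ->
  lo n @[n --> \oo] --> r -> hi n @[n --> \oo] --> r -> u n @[n --> \oo] --> r%:E.
Proof.
move=> u_lohi lo_r hi_r.
apply: (@squeeze_cvge _ _ _ _ (EFin \o lo) _ (EFin \o hi)).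
- exact: nearW.
- by apply: cvg_EFin; [exact: nearW | exact: lo_r].
- by apply: cvg_EFin; [exact: nearW | exact: hi_r].
Qed.

Section capacity.
Context {R : realType} {T : topologicalType} (L : set (T -> R)) (c : (T -> R) -> R).
Hypothesis HL : Cb_lattice L.
Hypothesis Hc : capacity L c.

Let L_cst a : L (fun=> a).
Proof. by case: HL. Qed.

Let L_scale a f : L f -> L (fun x => a * f x).
Proof. by case: HL => _ _ + _ _; apply. Qed.

Let L_continuous f : L f -> continuous f.
Proof. by case: HL => + _ _ _ _ => /[apply] -[]. Qed.

Let c_scale a f : L f -> c (fun x => a * f x) = `|a| * c f.
Proof. by case: Hc => _ + _ _; apply. Qed.

Let c_le f g : L f -> L g -> (forall x, `|f x| <= `|g x|) -> c f <= c g.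
Proof. by case: Hc => _ _ + _; apply. Qed.

Let c_ge0 f : L f -> 0 <= c f.
Proof.
move=> Lf; have := @c_le (fun x => 0 * f x) f (L_scale 0 Lf) Lf.
by rewrite c_scale // normr0 mul0r; apply=> x; rewrite mul0r normr0.
Qed.

Local Open Scope ereal_scope.

Lemma cap_lsc_ub f phi : L phi -> (forall x, (0 <= phi x <= f x)%R) ->
  (c phi)%:E <= cap_lsc L c f.
Proof. by move=> Lphi phif; apply: ereal_sup_ubound; exists phi. Qed.

Lemma le_cap_lsc f g : (forall x, (f x <= g x)%R) -> cap_lsc L c f <= cap_lsc L c g.
Proof.
move=> fg; apply: ereal_sup_le => _ [phi [Lphi phif] <-]; exists phi => //.
by split=> // x; case/andP: (phif x) => -> /le_trans; apply.
Qed.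

Lemma cap_lsc_le_cst f M : (forall x, (f x <= M)%R) -> cap_lsc L c f <= (c (fun=> M))%:E.
Proof.
move=> fM; apply: ge_ereal_sup => _ [phi [Lphi phif] <-]; rewrite lee_fin.
apply: c_le => // x; case/andP: (phif x) => phi0 /le_trans /(_ (fM x)) phiM.
by rewrite ger0_norm // (le_trans phiM (ler_norm _)).
Qed.

Lemma cap_lsc_ge0 f : (forall x, (0 <= f x)%R) -> 0 <= cap_lsc L c f.
Proof.
move=> f0; apply: le_trans (@cap_lsc_ub f (fun=> 0%R) (L_cst _) _).
  by rewrite lee_fin c_ge0.
by move=> x; rewrite lexx f0.
Qed.

Lemma cap_lsc_scale f g (k M : R) : (0 < k)%R ->
  (forall x, (0 <= g x <= k * f x)%R) -> cap_lsc L c f <= M%:E ->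
  cap_lsc L c g <= (k * M)%:E.
Proof.
move=> k0 gkf fM; apply: ge_ereal_sup => _ [phi [Lphi phig] <-].
have Lpsi : L (fun x => k^-1 * phi x)%R by exact: L_scale.
suff : (c (fun x => k^-1 * phi x)%R)%:E <= M%:E.
  by rewrite lee_fin c_scale // ger0_norm ?invr_ge0 ?(ltW k0) // ler_pdivrMl.
apply: le_trans fM; apply: cap_lsc_ub => // x.
case/andP: (phig x) => phi0 /le_trans phig'; case/andP: (gkf x) => _ /phig' phikf.
by rewrite mulr_ge0 ?invr_ge0 ?(ltW k0) //= ler_pdivrMl.
Qed.

Lemma cap_lsc_adherent f (e : R) : (0 < e)%R -> cap_lsc L c f \is a fin_num ->
  exists2 phi, L phi /\ (forall x, 0 <= phi x <= f x)%R &
    cap_lsc L c f - e%:E < (c phi)%:E.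
Proof.
move=> e0 /(ub_ereal_sup_adherent e0) [_ [phi phiP <-]] lt_phi.
by exists phi.
Qed.

Lemma cap_ext_lb g f : lower_semicontinuous (fun x => (f x)%:E) ->
  (forall x, (`|g x| <= f x)%R) -> cap_ext L c g <= cap_lsc L c f.
Proof. by move=> lf gf; apply: ereal_inf_lbound; exists f. Qed.

Lemma cap_ext_lsc f : lower_semicontinuous (fun x => (f x)%:E) ->
  (forall x, (0 <= f x)%R) -> cap_ext L c f = cap_lsc L c f.
Proof.
move=> lf f0; apply/le_anti/andP; split.
  by apply: cap_ext_lb => // x; rewrite ger0_norm.
apply: le_ereal_inf_tmp => _ [g [_ fg] <-]; apply: le_cap_lsc => x.
exact: le_trans (ler_norm _) (fg x).
Qed.

Lemma le_cap_ext g g' : (forall x, (`|g x| <= `|g' x|)%R) ->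
  cap_ext L c g <= cap_ext L c g'.
Proof.
move=> gg'; apply: le_ereal_inf => _ [f [lf g'f] <-]; exists f => //.
by split=> // x; exact: le_trans (gg' x) (g'f x).
Qed.

Lemma cap_ext_ge0 g : 0 <= cap_ext L c g.
Proof.
apply: le_ereal_inf_tmp => _ [f [_ gf] <-]; apply: cap_lsc_ge0 => x.
exact: le_trans (gf x).
Qed.

Lemma cap_ext_fin_num g (M : R) : (forall x, (`|g x| <= M)%R) ->
  cap_ext L c g \is a fin_num.
Proof.
move=> gM; rewrite ge0_fin_numE ?cap_ext_ge0 //; apply: le_lt_trans (ltry (c (fun=> M))).
apply: le_trans (cap_lsc_le_cst (f := fun=> M) _) => //.
by apply: cap_ext_lb => //; apply: continuous_lower_semicontinuous; exact: cst_continuous.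
Qed.

Lemma cap_ext_adherent g (e : R) : (0 < e)%R -> cap_ext L c g \is a fin_num ->
  exists2 f, lower_semicontinuous (fun x => (f x)%:E) /\ (forall x, `|g x| <= f x)%R &
    cap_lsc L c f < cap_ext L c g + e%:E.
Proof.
move=> e0 /(lb_ereal_inf_adherent e0) [_ [f fP <-]] lt_f.
by exists f.
Qed.

Section perfectly_normal_space.
Hypothesis urysohnT : urysohn_space R T.
Hypothesis GdeltaT : closed_Gdelta T.

Lemma cap_indic_open_approx (V : set T) : open V ->
  exists h : nat -> T -> R,
    [/\ (forall n, continuous (h n)), (forall n x, (0 <= h n x)%R),
        (forall n x, (h n x <= h n.+1 x)%R),
        (forall x, h n x @[n --> \oo] --> (\1_V x : R)) &
        cap_ext L c (h n) @[n --> \oo] --> cap_ext L c (\1_V : T -> R)].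
Proof.
move=> oV; have [k [k_cont kV k1]] := urysohn_seq_open urysohnT GdeltaT oV.
have capV : cap_ext L c \1_V = cap_lsc L c \1_V.
  by apply: cap_ext_lsc; [exact: lower_semicontinuous_indic | exact: indic_ge0].
have Vfin : cap_lsc L c \1_V \is a fin_num.
  by rewrite -capV (@cap_ext_fin_num _ 1) // => x; rewrite ger0_norm ?indic_ge0 ?indic_le1.
pose r := fine (cap_lsc L c \1_V); have rE : cap_lsc L c \1_V = r%:E by rewrite fineK.
have /choice [phi phiP] n : exists phi : T -> R,
    [/\ L phi, (forall x, 0 <= phi x <= \1_V x)%R & (r - harmonic n)%:E < (c phi)%:E].
  have [phi [Lphi phiV] lt_phi] := cap_lsc_adherent (harmonic_gt0 n) Vfin.
  by exists phi; split=> //; rewrite EFinB -rE.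
pose a n x := Num.max (k n x) (phi n x).
have a01 n x : (0 <= a n x <= \1_V x)%R.
  have [_ /(_ x) /andP[_ phiV] _] := phiP n; have /andP[k0 kV'] := kV n x.
  by rewrite le_max ge_max k0 kV' phiV.
have h0 n x : (0 <= running_max a n x)%R.
  by case/andP: (a01 0%N x) => + _; move/le_trans; apply; exact: le_running_max.
have h_cont n : continuous (running_max a n).
  apply: running_max_continuous => m.
  by apply: max_fun_continuous; [exact: k_cont | case: (phiP m) => /L_continuous].
exists (running_max a); split => //.
- by move=> n x; exact: running_max_nondecreasing.
- apply: running_max_cvg_indic => // x Vx; have [m km1] := k1 x Vx.
  exists m; apply/le_anti; rewrite {2}/a le_max km1 lexx andbT.
  by case/andP: (a01 m x) => _ /le_trans; apply; exact: indic_le1.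
- rewrite capV rE; apply: (@squeeze_fin_cvge _ _ (fun n => r - harmonic n)%R (fun=> r)).
  + move=> n; rewrite cap_ext_lsc; [|exact: continuous_lower_semicontinuous|exact: h0].
    have [Lphi phiV lt_phi] := phiP n; apply/andP; split.
      apply/ltW/(lt_le_trans lt_phi)/cap_lsc_ub => // x.
      case/andP: (phiV x) => -> _ /=; apply: le_trans (le_running_max a x (leqnn n)).
      by rewrite le_max lexx orbT.
    rewrite -rE; apply: le_cap_lsc => x; apply: running_max_le => m.
    by case/andP: (a01 m x).
  + by rewrite -[X in _ --> X]subr0; apply: cvgB; [exact: cvg_cst | exact: cvg_harmonic].
  + exact: cvg_cst.
Qed.

Lemma cap_indic_closed_approx (F : set T) : closed F ->
  exists g : nat -> T -> R,
    [/\ (forall n, continuous (g n)), (forall n x, (g n x <= 1)%R),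
        (forall n x, (g n.+1 x <= g n x)%R),
        (forall x, g n x @[n --> \oo] --> (\1_F x : R)) &
        cap_ext L c (g n) @[n --> \oo] --> cap_ext L c (\1_F : T -> R)].
Proof.
move=> cF; have Ffin : cap_ext L c \1_F \is a fin_num.
  by apply: (@cap_ext_fin_num _ 1) => x; rewrite ger0_norm ?indic_ge0 ?indic_le1.
pose r := fine (cap_ext L c \1_F); have rE : cap_ext L c \1_F = r%:E by rewrite fineK.
have /choice [f fP] n : exists f : T -> R,
    [/\ lower_semicontinuous (fun x => (f x)%:E), (forall x, `|\1_F x| <= f x)%R &
        cap_lsc L c f < (r + harmonic n)%:E].
  have [f [lf Ff] lt_f] := cap_ext_adherent (harmonic_gt0 n) Ffin.
  by exists f; split=> //; rewrite EFinD -rE.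
have hn_gt0 n : (0 < 1 + harmonic n :> R)%R by rewrite ltr_wpDr ?harmonic_ge0.
pose W n := [set x | ((1 + harmonic n)^-1 < f n x)%R].
have oW n : open (W n).
  by have [/lower_semicontinuousP lf _ _] := fP n; exact: lf.
have FW n : F `<=` W n.
  move=> x Fx; have [_ /(_ x) + _] := fP n; rewrite indicE mem_set // normr1.
  by apply: lt_le_trans; rewrite invf_lt1 // ltrDl harmonic_gt0.
have W_le n x : (\1_(W n) x <= (1 + harmonic n) * f n x)%R.
  have [_ Ff _] := fP n; have [Wx|Wx] := pselect (W n x).
    by rewrite indicE mem_set // -ler_pdivrMl // mulr1 ltW.
  by rewrite indicE memNset // mulr_ge0 ?(ltW (hn_gt0 n)) // (le_trans _ (Ff x)).
have [k [k_cont kFW k0]] := urysohn_seq_closed urysohnT GdeltaT cF oW FW.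
have g_ge n x : (\1_F x <= running_min k n x)%R.
  by apply: running_min_ge => m; case/andP: (kFW m x).
have g_le n x : (running_min k n x <= \1_(W n) x)%R.
  by apply: le_trans (ge_running_min k x (leqnn n)) _; case/andP: (kFW n x).
exists (running_min k); split.
- by move=> n; exact: running_min_continuous.
- by move=> n x; apply: le_trans (g_le n x) (indic_le1 _ _).
- by move=> n x; exact: running_min_nonincreasing.
- apply: running_min_cvg_indic => // n x.
  by case/andP: (kFW n x) => -> /le_trans; apply; exact: indic_le1.
- rewrite rE; apply: (@squeeze_fin_cvge _ _ (fun=> r)
    (fun n => (1 + harmonic n) * (r + harmonic n))%R).
  + move=> n; apply/andP; split.
      rewrite -rE; apply: le_cap_ext => x.
      by rewrite ger0_norm ?indic_ge0 // (le_trans (g_ge n x) (ler_norm _)).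
    apply: (le_trans (@cap_ext_lb _ \1_(W n) _ _)).
    * exact: lower_semicontinuous_indic.
    * by move=> x; rewrite ger0_norm ?(le_trans (indic_ge0 F x)).
    * have [_ _ lt_f] := fP n.
      by apply: (cap_lsc_scale (hn_gt0 n) _ (ltW lt_f)) => x; rewrite indic_ge0 W_le.
  + exact: cvg_cst.
  + have h_to0 := @cvg_harmonic R.
    have := cvgM (cvgD (cvg_cst (1%R : R)) h_to0) (cvgD (cvg_cst r) h_to0).
    by rewrite !addr0 mul1r; apply.
Qed.

End perfectly_normal_space.

End capacity.

Theorem proposition2p2 (R : realType) (T : topologicalType)
    (L : set (T -> R)) (c : (T -> R) -> R) :
  @metrizable_space R T -> @separable_space T ->
  Cb_lattice L -> generates_topology L -> capacity L c ->
  (forall V : set T, open V ->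
     exists h : nat -> T -> R,
       [/\ (forall n, continuous (h n)),
           (forall n x, 0 <= h n x),
           (forall n x, h n x <= h n.+1 x),
           (forall x, h n x @[n --> \oo] --> (\1_V x : R)) &
           cap_ext L c (h n) @[n --> \oo] --> cap_ext L c (\1_V : T -> R)]) /\
  (forall F : set T, closed F ->
     exists g : nat -> T -> R,
       [/\ (forall n, continuous (g n)),
           (forall n x, g n x <= 1),
           (forall n x, g n.+1 x <= g n x),
           (forall x, g n x @[n --> \oo] --> (\1_F x : R)) &
           cap_ext L c (g n) @[n --> \oo] --> cap_ext L c (\1_F : T -> R)]).
Proof.
move=> [d [d_ge0 d0 dC d_triangle d_open]] _ HL _ Hc.
have dxx x : d x x = 0 by apply/d0.
have urysohnT := metric_urysohn d_ge0 dxx dC d_triangle d_open.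
have GdeltaT := metric_closed_Gdelta d_ge0 dxx dC d_triangle d_open.
split.
- exact: cap_indic_open_approx.
- exact: cap_indic_closed_approx.
Qed.
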